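(* For every $\delta\in(0,1)$ there exists $c(\delta)>0$ such that the following holds. Let $N\in\mathbb N$, let $p_1,\dots,p_N\in[0,1/2]$, and let $\Omega$ be a random subset of $\{1,\dots,N\}$ in which each $i$ belongs to $\Omega$ independently of the others with probability $p_i$. Let $\omega:=\mathbb E\#\Omega=\sum_{i=1}^N p_i$ and suppose $\omega\ge c(\delta)$. Then, with $\mathcal R$ the event $\{(1-\delta)\omega\le\#\Omega\le 5\omega\}$, $$\mathbb E(\#\Omega\mid\mathcal R)\ge\mathbb E\#\Omega.$$
   Context: $\#\Omega$ denotes the cardinality of $\Omega$. *)

From mathcomp Require Import all_boot all_order all_algebra.
From mathcomp Require Import reals.
Set Implicit Arguments. Unset Strict Implicit. Unset Printing Implicit Defensive.
Import Order.TTheory GRing.Theory Num.Theory.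
Local Open Scope ring_scope.

Section Bern.
Variables (R : realType) (N : nat) (p : 'I_N -> R).

Definition subset_prob (S : {set 'I_N}) : R :=
  (\prod_(i in S) p i) * (\prod_(i in ~: S) (1 - p i)).

Definition Prob (E : {set {set 'I_N}}) : R := \sum_(S in E) subset_prob S.

Definition exp_card : R := \sum_(S : {set 'I_N}) subset_prob S * #|S|%:R.

Definition cond_exp_card (E : {set {set 'I_N}}) : R :=
  (\sum_(S in E) subset_prob S * #|S|%:R) / Prob E.

Definition omega : R := \sum_(i < N) p i.

Definition event_R (delta : R) : {set {set 'I_N}} :=
  [set S : {set 'I_N} | ((1 - delta) * omega <= #|S|%:R) && (#|S|%:R <= 5 * omega)].
End Bern.

From mathcomp Require Import all_boot all_order all_algebra.
From mathcomp Require Import reals sequences exp.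
From mathcomp Require Import ring lra zify.
Set Implicit Arguments. Unset Strict Implicit. Unset Printing Implicit Defensive.
Import Order.TTheory GRing.Theory Num.Theory.
Local Open Scope ring_scope.

(* Since E(#Omega - omega) = 0, the claim E(#Omega | R) >= omega amounts to
   E((#Omega - omega) 1_{not R}) <= 0, and c = 3 works for every delta.
   Outside R, the lower tail contributes only nonpositive terms, among them
   -omega P(Omega = {}) <= -omega exp(-2 omega) because p_i <= 1/2.  The upper
   tail is handled by an exponential moment: n <= 3 6^n exp(-7 omega) when
   n > 5 omega, and E 6^#Omega = prod (1 + 5 p_i) <= exp(5 omega), so it
   contributes at most 3 exp(-2 omega). *)

Lemma leq_mul_expn5 n : (n * 5 ^ n <= 3 * 6 ^ n)%N.
Proof.
elim: n => [//|n IH].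
case: n IH => [|[|[|[|[|n]]]]] // IH.
rewrite !expnS in IH *; nia.
Qed.

Lemma expR_7_5_le5 (R : realType) : expR (7 / 5 : R) <= 5.
Proof.
have e15 : expR (1 / 5 : R) <= 5 / 4.
  have := expR_ge1Dx (- (1 / 5) : R); rewrite expRN.
  have := mulfV (lt0r_neq0 (expR_gt0 (1 / 5 : R))); have := expR_gt0 (1 / 5 : R).
  nra.
have -> : (7 / 5 : R) = 7%:R * (1 / 5) by field.
rewrite expRM_natl; apply: (@le_trans _ _ ((5 / 4 : R) ^+ 7)).
  by apply: lerXn2r; rewrite ?nnegrE ?expR_ge0 //; lra.
by rewrite !exprS expr0; lra.
Qed.

Lemma upper_tail_le_expR (R : realType) (w : R) n :
  5 * w < n%:R -> n%:R <= 3 * 6 ^+ n * expR (- (7 * w)).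
Proof.
move=> n_gt.
have n5n : n%:R * 5 ^+ n <= 3 * 6 ^+ n :> R.
  by have := leq_mul_expn5 n; rewrite -(ler_nat R) !natrM !natrX.
have e7w : expR (7 * w) <= 5 ^+ n.
  apply: (@le_trans _ _ (expR (n%:R * (7 / 5)))); first by rewrite ler_expR; lra.
  by rewrite expRM_natl; apply: lerXn2r; rewrite ?nnegrE ?expR_ge0 ?expR_7_5_le5.
have : 1 <= 5 ^+ n * expR (- (7 * w)) by rewrite expRN ler_pdivlMr ?expR_gt0 ?mul1r.
have := expR_ge0 (- (7 * w)); have : 0 <= n%:R :> R by [].
nra.
Qed.

Lemma expRN2_le_1B (R : realType) (x : R) :
  0 <= x <= 2^-1 -> expR (- (2 * x)) <= 1 - x.
Proof.
move=> /andP[x0 x2]; have := expR_ge1Dx (2 * x).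
rewrite expRN -div1r ler_pdivrMr ?expR_gt0 //; nra.
Qed.

Lemma prod_1D_le_expR (R : realType) (I : finType) (x : I -> R) :
  (forall i, -1 <= x i) -> \prod_i (1 + x i) <= expR (\sum_i x i).
Proof.
move=> x_ge; rewrite expR_sum; apply: ler_prod => i _.
by rewrite expR_ge1Dx andbT -lerBlDl sub0r.
Qed.

Lemma exists_subset_card (T : finType) (A : {set T}) k :
  (k <= #|A|)%N -> exists2 B : {set T}, B \subset A & #|B| = k.
Proof.
move=> k_le; exists [set x in take k (enum A)].
  by apply/subsetP => x; rewrite inE => /mem_take; rewrite mem_enum.
rewrite cardsE; move/card_uniqP: (take_uniq k (enum_uniq A)) => ->.
by rewrite size_takel // -cardE.
Qed.

Section SubsetProb.
Variables (R : realType) (N : nat) (p : 'I_N -> R).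

Lemma sum_subset_prob_prod (a b : 'I_N -> R) :
  \sum_(S : {set 'I_N}) subset_prob p S * ((\prod_(i in S) a i) * \prod_(i in ~: S) b i)
  = \prod_i (p i * a i + (1 - p i) * b i).
Proof.
rewrite bigA_distr; apply: eq_bigr => S _.
rewrite /subset_prob mulrACA -!big_split /= [RHS](bigID (mem S)) /=.
congr (_ * _); first by apply: eq_bigr => i ->.
by apply: eq_big => [i|i]; rewrite in_setC // => /negbTE ->.
Qed.

Lemma sum_subset_prob : \sum_(S : {set 'I_N}) subset_prob p S = 1.
Proof.
transitivity (\sum_(S : {set 'I_N})
    subset_prob p S * ((\prod_(i in S) 1) * \prod_(i in ~: S) 1)).
  by apply: eq_bigr => S _; rewrite !big1_eq !mulr1.
by rewrite sum_subset_prob_prod; apply: big1 => i _; rewrite !mulr1 addrC subrK.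
Qed.

Lemma sum_subset_prob_mem i : \sum_(S : {set 'I_N}) subset_prob p S * (i \in S)%:R = p i.
Proof.
have prod_notin S : \prod_(j in ~: S) ((j != i)%:R : R) = (i \in S)%:R.
  have [iS|iNS] := boolP (i \in S).
    by apply: big1 => j; rewrite in_setC; case: eqP => // ->; rewrite iS.
  by rewrite (bigD1 i) ?inE //= eqxx mul0r.
transitivity (\sum_(S : {set 'I_N})
    subset_prob p S * ((\prod_(j in S) 1) * \prod_(j in ~: S) (j != i)%:R)).
  by apply: eq_bigr => S _; rewrite big1_eq mul1r prod_notin.
rewrite sum_subset_prob_prod (bigD1 i) //= eqxx mulr0 mulr1 addr0 big1 ?mulr1 // => j /negbTE ->.
by rewrite !mulr1 addrC subrK.
Qed.

Lemma exp_card_omega : exp_card p = omega p.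
Proof.
rewrite /exp_card /omega.
under eq_bigr => S _ do
  rewrite -sum1_card natr_sum big_mkcond mulr_sumr /=.
rewrite exchange_big /=; apply: eq_bigr => i _.
by rewrite -sum_subset_prob_mem; apply: eq_bigr => S _; case: (i \in S).
Qed.

Lemma sum_subset_prob_expn (t : R) :
  \sum_(S : {set 'I_N}) subset_prob p S * t ^+ #|S| = \prod_i (1 + (t - 1) * p i).
Proof.
transitivity (\sum_(S : {set 'I_N})
    subset_prob p S * ((\prod_(i in S) t) * \prod_(i in ~: S) 1)).
  by apply: eq_bigr => S _; rewrite prodr_const big1_eq mulr1.
by rewrite sum_subset_prob_prod; apply: eq_bigr => i _; ring.
Qed.

Lemma subset_prob_set0 : subset_prob p set0 = \prod_i (1 - p i).
Proof.
rewrite /subset_prob big_set0 mul1r setC0.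
by apply: eq_bigl => i; rewrite inE.
Qed.

Lemma exp_card_le_cond_exp_card (E : {set {set 'I_N}}) :
  0 < Prob p E ->
  \sum_(S | S \notin E) subset_prob p S * (#|S|%:R - exp_card p) <= 0 ->
  exp_card p <= cond_exp_card p E.
Proof.
move=> PE_gt0 outside_le0.
have centered : \sum_(S : {set 'I_N}) subset_prob p S * (#|S|%:R - exp_card p) = 0.
  under eq_bigr do rewrite mulrBr.
  by rewrite sumrB -mulr_suml sum_subset_prob mul1r subrr.
rewrite (bigID (mem E)) /= in centered.
have inside : \sum_(S in E) subset_prob p S * (#|S|%:R - exp_card p) =
    \sum_(S in E) subset_prob p S * #|S|%:R - exp_card p * Prob p E.
  by rewrite mulr_sumr -sumrB; apply: eq_bigr => S _; ring.
rewrite /cond_exp_card ler_pdivlMr //; lra.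
Qed.

Section Bounded.
Hypothesis p01 : forall i, 0 <= p i <= 1.

Lemma subset_prob_ge0 S : 0 <= subset_prob p S.
Proof.
by apply: mulr_ge0; apply: prodr_ge0 => i _; have /andP[] := p01 i; lra.
Qed.

Lemma Prob_gt0 (E : {set {set 'I_N}}) S :
  S \in E -> 0 < subset_prob p S -> 0 < Prob p E.
Proof.
move=> SE PS_gt0; rewrite /Prob (bigD1 S) //=.
by rewrite ltr_pwDl // sumr_ge0 // => T _; apply: subset_prob_ge0.
Qed.

Lemma upper_tail_card_le :
  \sum_(S : {set 'I_N} | 5 * omega p < #|S|%:R) subset_prob p S * #|S|%:R
  <= 3 * expR (- (2 * omega p)).
Proof.
set w := omega p; set e := expR (- (7 * w)).
apply: (@le_trans _ _ (\sum_(S : {set 'I_N}) subset_prob p S * (3 * 6 ^+ #|S| * e))).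
  rewrite [X in X <= _]big_mkcond /=; apply: ler_sum => S _.
  have := subset_prob_ge0 S; case: ifP => [tail|_] P_ge0.
    by rewrite ler_wpM2l // upper_tail_le_expR.
  by rewrite mulr_ge0 // !mulr_ge0 ?exprn_ge0 ?expR_ge0.
have -> : \sum_(S : {set 'I_N}) subset_prob p S * (3 * 6 ^+ #|S| * e) =
    3 * (e * \sum_(S : {set 'I_N}) subset_prob p S * 6 ^+ #|S|).
  by rewrite !mulr_sumr; apply: eq_bigr => S _; ring.
rewrite sum_subset_prob_expn ler_wpM2l // mulrC.
have -> : 6 - 1 = 5 :> R by lra.
have moment : \prod_i (1 + 5 * p i) <= expR (5 * w).
  rewrite /w /omega mulr_sumr; apply: prod_1D_le_expR => i.
  by have /andP[] := p01 i; lra.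
apply: (@le_trans _ _ (expR (5 * w) * e)).
  by rewrite ler_wpM2r ?expR_ge0.
by rewrite /e -expRD (_ : 5 * w + - (7 * w) = - (2 * w)) //; ring.
Qed.

Section HalfBounded.
Hypothesis p_le_half : forall i, p i <= 2^-1.

Lemma expR_le_prob_set0 : expR (- (2 * omega p)) <= subset_prob p set0.
Proof.
rewrite subset_prob_set0 /omega mulr_sumr -sumrN expR_sum.
apply: ler_prod => i _; rewrite expR_ge0 expRN2_le_1B //.
by have /andP[pi0 _] := p01 i; rewrite pi0 p_le_half.
Qed.

Lemma omega_le_half_card_support : 2 * omega p <= #|[set i | 0 < p i]|%:R.
Proof.
rewrite -ler_pdivlMl // /omega (bigID (fun i => 0 < p i)) /=.
rewrite [X in _ + X]big1 ?addr0 => [|i]; last first.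
  by have /andP[pi0 _] := p01 i; rewrite -leNgt => pi_le0; apply/eqP; rewrite eq_le pi_le0.
apply: (@le_trans _ _ (\sum_(i | 0 < p i) 2^-1)); first exact: ler_sum.
rewrite sumr_const mulr_natr.
suff -> : #|[set i | 0 < p i]| = #|(fun i => 0 < p i)| by [].
by apply: eq_card => i; rewrite inE.
Qed.

Variable delta : R.
Hypotheses (delta_ge0 : 0 <= delta) (delta_lt1 : delta < 1).

Lemma Prob_event_R_gt0 : 1 <= omega p -> 0 < Prob p (event_R p delta).
Proof.
set w := omega p => w_ge1.
have w_ge0 : 0 <= w by lra.
set m := (Num.truncn w).+1.
have /andP[trunc_le w_lt_m] : (Num.truncn w)%:R <= w < m%:R := truncn_itv w_ge0.
have m_le_w1 : m%:R <= w + 1 by rewrite -natr1; lra.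
have := omega_le_half_card_support; rewrite -/w; set supp := [set i | 0 < p i] => supp_ge.
have m_le : (m <= #|supp|)%N by rewrite /m truncn_lt_nat //; lra.
have [S S_supp cardS] := exists_subset_card m_le.
apply: (@Prob_gt0 _ S).
  have := mulr_ge0 delta_ge0 w_ge0.
  by rewrite inE cardS -/w => dw_ge0; apply/andP; split; lra.
apply: mulr_gt0; apply: prodr_gt0 => i iS.
  by move/subsetP: S_supp => /(_ i iS); rewrite inE.
by have := p_le_half i; lra.
Qed.

Lemma sum_notin_event_R_le0 : 3 <= omega p ->
  \sum_(S | S \notin event_R p delta) subset_prob p S * (#|S|%:R - omega p) <= 0.
Proof.
set w := omega p => w_ge3.
have set0_notin : set0 \notin event_R p delta.
  have : 0 < (1 - delta) * w by rewrite mulr_gt0 ?subr_gt0 //; lra.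
  by rewrite inE cards0 negb_and -ltNge => ->.
rewrite (bigD1 set0) //= cards0 sub0r.
have tail := upper_tail_card_le; rewrite -/w in tail.
have empty := expR_le_prob_set0; rewrite -/w in empty.
suff rest : \sum_(S | (S \notin event_R p delta) && (S != set0))
    subset_prob p S * (#|S|%:R - w)
    <= \sum_(S : {set 'I_N} | 5 * w < #|S|%:R) subset_prob p S * #|S|%:R.
  have := expR_ge0 (- (2 * w)); nra.
rewrite [X in X <= _]big_mkcond [X in _ <= X]big_mkcond /=.
apply: ler_sum => S _; have P_ge0 := subset_prob_ge0 S.
case: ifP => [/andP[SNR _]|_]; last by case: ifP => // _; rewrite mulr_ge0.
rewrite inE -/w negb_and -!ltNge in SNR.
case: ifP => [_|/negbT]; first by rewrite ler_wpM2l // lerBlDr lerDl; lra.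
have dw_ge0 : 0 <= delta * w by rewrite mulr_ge0 //; lra.
by case/orP: SNR => [lower|->] // _; rewrite mulr_ge0_le0 // subr_le0; lra.
Qed.

End HalfBounded.
End Bounded.
End SubsetProb.

Theorem lemma2 (R : realType) (delta : R) :
  0 < delta < 1 ->
  exists c : R, 0 < c /\
    forall (N : nat) (p : 'I_N -> R),
      (forall i, 0 <= p i <= 2^-1) ->
      c <= omega p ->
      0 < Prob p (event_R p delta) /\
      exp_card p <= cond_exp_card p (event_R p delta).
Proof.
move=> /andP[delta_gt0 delta_lt1]; exists 3; split=> // N p p_bounds omega_ge3.
have p01 i : 0 <= p i <= 1 by have /andP[] := p_bounds i; lra.
have p_le_half i : p i <= 2^-1 by have /andP[] := p_bounds i.
have delta_ge0 := ltW delta_gt0.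
have PR_gt0 : 0 < Prob p (event_R p delta).
  by apply: Prob_event_R_gt0 => //; lra.
split=> //; apply: exp_card_le_cond_exp_card => //.
by rewrite exp_card_omega; apply: sum_notin_event_R_le0.
Qed.
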